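(* Let $V$ be a finite-dimensional super vector space over a field of characteristic $0$, and let $L\subseteq\mathcal{E}=\mathfrak{gl}(V)\oplus V$ be a graded subspace. Then $L=L^\perp$ if and only if there exist a graded subspace $W\subseteq V$ and an even linear map $\pi:V\to\mathfrak{gl}(V)$ which is super skew-symmetric, i.e. $\pi(x)(y)=-(-1)^{|x||y|}\pi(y)(x)$ for all homogeneous $x,y\in V$, such that $$L=\{X+\pi(x)+x:\ X\in W^0,\ x\in W\},\qquad W^0=\{X\in\mathfrak{gl}(V): X(w)=0\ \forall w\in W\}.$$ In this situation $L\cap\mathfrak{gl}(V)=W^0$ and $W=D^0:=\{x\in V: X(x)=0\ \forall X\in D\}$ where $D=L\cap\mathfrak{gl}(V)$.
   Context: $\mathfrak{gl}(V)$: linear endomorphisms of $V$ with natural $\mathbb{Z}_2$-grading and supercommutator $[A,B]=AB-(-1)^{|A||B|}BA$. $\mathcal{E}=\mathfrak{gl}(V)\oplus V$ graded by $\mathcal{E}_\alpha=\mathfrak{gl}(V)_\alpha\oplus V_\alpha$, homogeneous elements $A+x$ with $|A|=|x|$. $V$-valued pairing: $\langle A+x,B+y\rangle=\tfrac12(Ay+(-1)^{|x||y|}Bx)$, extended bilinearly. For a subspace $F\subseteq\mathcal{E}$, $F^\perp=\{e\in\mathcal{E}:\langle e,f\rangle=0\ \forall f\in F\}$; $F$ is called maximal isotropic if $F=F^\perp$. *)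

(* Model of a finite-dimensional super vector space V = F^(m|n):
   V := 'rV[F]_(m+n), coordinates j with j < m are even, j >= m are odd.
   gl(V) := 'M[F]_(m+n), acting on the right: A(y) := y *m A.
   E := gl(V) (+) V  is the product type, elements (A, x) stand for A + x. *)
From HB Require Import structures.
From mathcomp Require Import all_boot all_order all_algebra.
Set Implicit Arguments. Unset Strict Implicit. Unset Printing Implicit Defensive.
Import Order.TTheory GRing.Theory Num.Theory.
Local Open Scope ring_scope.

Section Super.
Variables (F : fieldType) (m n : nat).

Definition Vsp := 'rV[F]_(m + n).
Definition glV := 'M[F]_(m + n).
Definition Esp := (glV * Vsp)%type.

Definition ipar (i : 'I_(m + n)) : bool := (m <= i)%N.

Definition vproj (b : bool) (x : Vsp) : Vsp :=
  \row_j (if ipar j == b then x 0 j else 0).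

(* degree-b component of an endomorphism (entry i j maps coordinate i to j) *)
Definition mproj (b : bool) (A : glV) : glV :=
  \matrix_(i, j) (if (ipar i != ipar j) == b then A i j else 0).

Definition vhom (b : bool) (x : Vsp) : Prop := vproj b x = x.
Definition mhom (b : bool) (A : glV) : Prop := mproj b A = A.

Definition eproj (b : bool) (e : Esp) : Esp := (mproj b e.1, vproj b e.2).

(* the V-valued pairing <A+x, B+y> = 1/2 (A y + (-1)^{|x||y|} B x) on homogeneous
   elements, extended bilinearly *)
Definition epair (e f : Esp) : Vsp :=
  2%:R^-1 *: \sum_(a : bool) \sum_(b : bool)
     ((vproj b f.2) *m (mproj a e.1)
      + (-1) ^+ (a && b) *: ((vproj a e.2) *m (mproj b f.1))).

Definition in_perp (L : {vspace Esp}) (e : Esp) : Prop :=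
  forall f, f \in L -> epair e f = 0.

Definition max_isotropic (L : {vspace Esp}) : Prop :=
  forall e, e \in L <-> in_perp L e.

Definition graded_E (L : {vspace Esp}) : Prop :=
  forall (b : bool) e, e \in L -> eproj b e \in L.

Definition graded_V (W : {vspace Vsp}) : Prop :=
  forall (b : bool) x, x \in W -> vproj b x \in W.

Definition annV (W : {vspace Vsp}) (X : glV) : Prop :=
  forall w, w \in W -> w *m X = 0.

Definition annGl (D : glV -> Prop) (x : Vsp) : Prop :=
  forall X, D X -> x *m X = 0.

Definition even_map (pi : Vsp -> glV) : Prop :=
  forall (b : bool) x, vhom b x -> mhom b (pi x).

Definition super_skew (pi : Vsp -> glV) : Prop :=
  forall (a b : bool) x y, vhom a x -> vhom b y ->
    y *m pi x = - ((-1) ^+ (a && b) *: (x *m pi y)).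

Definition L_of (L : {vspace Esp}) (W : {vspace Vsp}) (pi : Vsp -> glV) : Prop :=
  forall e, e \in L <-> exists X x, [/\ annV W X, x \in W & e = (X + pi x, x)].

End Super.

(* Writing s(x, B) = sum_(a,b) (-1)^(ab) B_b(x_a) for the signed action of B
   on x, the pairing reads 2 <A + x, B + y> = A(y) + s(x, B)  (epairE).

   Super skew-symmetry
   says s(x, pi y) = - pi x (y), so L is isotropic.  If A + z is orthogonal
   to L, it is orthogonal to every homogeneous X in W^0; as the summands of
   s(z, X) have distinct degrees this forces X(z) = 0, so z lies in W^00 = W.
   Pairing A + z with the graph of pi then shows A - pi z in W^0.

   Let W be the projection of
   L onto V and w |-> lift w + w a linear section of L over W; as L is graded,
   the even part sg of lift gives a section too (EvenMaps).  Extending it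
   through an even projector P onto W, pi x = P o sg(P x) (Extension) is even,
   super skew-symmetric by isotropy, and has its graph over W in L; finally
   L = W^0 + graph(pi) because L /\ gl(V) = W^0 for L = L^perp.

   The descriptions L /\ gl(V) = W^0 and W = (L /\ gl(V))^0 follow from the
   graph description and W^00 = W. *)
From HB Require Import structures.
From mathcomp Require Import all_boot all_order all_algebra.
Import GRing.Theory.
Local Open Scope ring_scope.
Set Implicit Arguments. Unset Strict Implicit. Unset Printing Implicit Defensive.

Section Grading.
Variables (F : fieldType) (m n : nat).
Local Notation V := (Vsp F m n).
Local Notation G := (glV F m n).
Local Notation E := (Esp F m n).

Definition parity_mx (b : bool) : G := diag_mx (\row_j ((ipar j == b)%:R : F)).

Lemma vprojE b (x : V) : vproj b x = x *m parity_mx b.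
Proof.
apply/rowP => j; rewrite /vproj mul_mx_diag !mxE.
by case: (ipar j == b); rewrite ?mulr1 ?mulr0.
Qed.

Lemma vproj_is_linear b : linear (vproj b : V -> V).
Proof. by move=> c x y; rewrite !vprojE mulmxDl scalemxAl. Qed.
HB.instance Definition _ b :=
  GRing.isLinear.Build F V V *:%R (vproj b) (vproj_is_linear b).

Lemma mproj_is_linear b : linear (mproj b : G -> G).
Proof.
move=> c A B; apply/matrixP => i j; rewrite !mxE.
by case: ifP; rewrite ?addr0 ?mulr0.
Qed.
HB.instance Definition _ b :=
  GRing.isLinear.Build F G G *:%R (mproj b) (mproj_is_linear b).

Lemma vproj_sum (x : V) : \sum_(b : bool) vproj b x = x.
Proof.
apply/rowP => j; rewrite big_bool !mxE.
by case: (ipar j); rewrite /= ?addr0 ?add0r.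
Qed.

Lemma mproj_sum (A : G) : \sum_(b : bool) mproj b A = A.
Proof.
apply/matrixP => i j; rewrite big_bool !mxE.
by case: (ipar i != ipar j); rewrite /= ?addr0 ?add0r.
Qed.

Lemma vprojK a b (x : V) : vproj a (vproj b x) = if a == b then vproj b x else 0.
Proof.
apply/rowP => j; rewrite !mxE.
by case: a; case: b; rewrite /= ?mxE; case: (ipar j).
Qed.

Lemma mprojK a b (A : G) : mproj a (mproj b A) = if a == b then mproj b A else 0.
Proof.
apply/matrixP => i j; rewrite !mxE.
by case: a; case: b; rewrite /= ?mxE; case: (ipar i != ipar j).
Qed.

Lemma vhomP b (x : V) : vhom b x -> forall c, vproj c x = if c == b then x else 0.
Proof. by rewrite /vhom => h c; rewrite -h vprojK h. Qed.

Lemma mhomP b (A : G) : mhom b A -> forall c, mproj c A = if c == b then A else 0.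
Proof. by rewrite /mhom => h c; rewrite -h mprojK h. Qed.

Lemma vhom_proj b (x : V) : vhom b (vproj b x).
Proof. by rewrite /vhom vprojK eqxx. Qed.

Lemma mhom_proj b (A : G) : mhom b (mproj b A).
Proof. by rewrite /mhom mprojK eqxx. Qed.

Lemma vproj_mul c b (y : V) (A : G) :
  vproj c (y *m mproj b A) = vproj (c (+) b) y *m mproj b A.
Proof.
apply/rowP => j; rewrite !mxE; case: ifP => hj.
  apply: eq_bigr => i _; rewrite !mxE.
  by move: hj; case: (ipar i); case: (ipar j); case: c; case: b;
    rewrite //= ?mul0r ?mulr0.
rewrite big1 // => i _; rewrite !mxE.
by move: hj; case: (ipar i); case: (ipar j); case: c; case: b;
  rewrite //= ?mul0r ?mulr0.
Qed.

Lemma mhomM a b (A B : G) : mhom a A -> mhom b B -> mhom (a (+) b) (A *m B).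
Proof.
rewrite /mhom => <- <-; apply/matrixP => i j; rewrite !mxE; case: ifP => h //.
rewrite big1 // => k _; rewrite !mxE.
by move: h; case: (ipar i); case: (ipar j); case: (ipar k); case: a; case: b;
  rewrite //= ?mul0r ?mulr0.
Qed.

Lemma vhom_mul_even b (u : V) (P : G) :
  mhom false P -> vhom b u -> vhom b (u *m P).
Proof. by move=> evP hu; rewrite /vhom -evP vproj_mul addbF hu. Qed.

Lemma vhom_mul_mproj a b (u : V) (A : G) : vhom a u ->
  u *m mproj b A = vproj (a (+) b) (u *m A).
Proof.
move=> hu; rewrite -{2}(mproj_sum A) mulmx_sumr linear_sum big_bool /=.
rewrite !vproj_mul !(vhomP hu).
by case: a b {hu} => [] [] /=; rewrite ?mul0mx ?addr0 ?add0r.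
Qed.

Lemma annV_mproj (W : {vspace V}) Y b :
  graded_V W -> annV W Y -> annV W (mproj b Y).
Proof.
move=> gW hY w wW; rewrite -(vproj_sum w) mulmx_suml big1 // => a _.
by rewrite (vhom_mul_mproj _ _ (vhom_proj a w)) hY ?linear0 ?gW.
Qed.

Lemma ann_annV (W : {vspace V}) x :
  (forall Y, annV W Y -> x *m Y = 0) -> x \in W.
Proof.
move=> hx; apply: contraT => xW.
pose Y := lin1_mx (\1%VF - projv W).
have annY : annV W Y.
  move=> w wW; rewrite mul_rV_lin1 /= add_lfunE opp_lfunE id_lfunE.
  by rewrite projv_id ?subrr.
suff : x *m Y != 0 by rewrite hx ?eqxx.
rewrite mul_rV_lin1 /= add_lfunE opp_lfunE id_lfunE subr_eq0.
by apply: contra xW => /eqP ->; apply: memv_proj.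
Qed.

Lemma pairD (A B : G) (x y : V) : (A, x) + (B, y) = (A + B, x + y) :> E.
Proof. by []. Qed.

Lemma pairB (A B : G) (x y : V) : (A, x) - (B, y) = (A - B, x - y) :> E.
Proof. by []. Qed.

(* The signed action s(x, B) = sum_(a,b) (-1)^(ab) B_b(x_a), the term of the
   pairing in which the sign rule acts. *)
Definition saction (x : V) (B : G) : V :=
  \sum_(a : bool) \sum_(b : bool) (-1) ^+ (a && b) *: (vproj a x *m mproj b B).

Lemma epairE (e f : E) : epair e f = 2%:R^-1 *: (f.2 *m e.1 + saction e.2 f.1).
Proof.
rewrite /epair /saction; congr (_ *: _).
under eq_bigr do rewrite big_split; rewrite big_split /=; congr (_ + _).
rewrite -[in RHS](mproj_sum e.1) -[in RHS](vproj_sum f.2) mulmx_sumr.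
by apply: eq_bigr => a _; rewrite mulmx_suml.
Qed.

Lemma saction_hom a b (u : V) (B : G) : vhom a u -> mhom b B ->
  saction u B = (-1) ^+ (a && b) *: (u *m B).
Proof.
move=> hu hB; rewrite /saction !big_bool /= !(vhomP hu) !(mhomP hB).
by case: a b {hu hB} => [] [];
  rewrite /= ?mul0mx ?mulmx0 ?scaler0 ?addr0 ?add0r.
Qed.

Lemma saction0 (B : G) : saction 0 B = 0.
Proof.
rewrite /saction big1 // => a _; rewrite big1 // => b _.
by rewrite linear0 mul0mx scaler0.
Qed.

Lemma sactionD (x : V) (B C : G) : saction x (B + C) = saction x B + saction x C.
Proof.
rewrite /saction -big_split; apply: eq_bigr => a _; rewrite -big_split.
by apply: eq_bigr => b _; rewrite linearD mulmxDr scalerDr.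
Qed.

Lemma saction_annV (W : {vspace V}) x Y :
  graded_V W -> x \in W -> annV W Y -> saction x Y = 0.
Proof.
move=> gW xW hY; rewrite /saction big1 // => a _; rewrite big1 // => b _.
by rewrite (annV_mproj b gW hY) ?scaler0 ?gW.
Qed.

(* Against a homogeneous operator, the summands of the signed action have
   pairwise distinct degrees, so the signed action vanishes only if the
   action does. *)
Lemma saction_mproj_eq0 (z : V) (Y : G) c :
  saction z (mproj c Y) = 0 -> z *m mproj c Y = 0.
Proof.
have sactionE : saction z (mproj c Y) =
    \sum_(a : bool) (-1) ^+ (a && c) *: (vproj a z *m mproj c Y).
  apply: eq_bigr => a _; rewrite (bigD1 c) //= mprojK eqxx big1 ?addr0 //.
  by move=> b /negPf hb; rewrite mprojK hb mulmx0 scaler0.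
rewrite sactionE => h; rewrite -(vproj_sum z) mulmx_suml big1 // => a _.
have := congr1 (vproj (a (+) c)) h; rewrite linear0 linear_sum.
under eq_bigr => a' _ do rewrite linearZ /= vproj_mul -addbA addbb addbF vprojK.
rewrite (bigD1 a) //= eqxx big1 ?addr0 => [|a' /negPf ha']; last first.
  by rewrite eq_sym ha' mul0mx scaler0.
by move/eqP; rewrite scaler_eq0 signr_eq0 => /eqP.
Qed.

Lemma epair_eq0 (two_neq0 : (2%:R : F) != 0) (e f : E) :
  epair e f = 0 <-> f.2 *m e.1 + saction e.2 f.1 = 0.
Proof.
rewrite epairE; split => [/eqP | ->]; last by rewrite scaler0.
by rewrite scaler_eq0 invr_eq0 (negPf two_neq0) => /eqP.
Qed.

End Grading.

Section GraphDescription.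
Variables (F : fieldType) (m n : nat).
Local Notation V := (Vsp F m n).
Local Notation G := (glV F m n).
Local Notation E := (Esp F m n).

Variables (W : {vspace V}) (pi : {linear V -> G}).
Hypotheses (gW : graded_V W) (evpi : even_map pi) (skpi : super_skew pi).

Lemma mproj_even b y : mproj b (pi y) = pi (vproj b y).
Proof.
rewrite -{1}(vproj_sum y) big_bool linearD linearD /=.
rewrite (mhomP (evpi (vhom_proj true y))) (mhomP (evpi (vhom_proj false y))).
by case: b; rewrite /= ?addr0 ?add0r.
Qed.

Lemma saction_skew x y : saction x (pi y) = - (y *m pi x).
Proof.
rewrite /saction -[in RHS](vproj_sum x) linear_sum mulmx_sumr -sumrN.
apply: eq_bigr => a _; rewrite -[in RHS](vproj_sum y) mulmx_suml -sumrN.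
apply: eq_bigr => b _; rewrite mproj_even.
rewrite (skpi (vhom_proj b y) (vhom_proj a x)) scalerN scalerA.
by case: a b => [] []; rewrite /= ?expr0 ?expr1 ?mulr1 ?mulrNN ?mulr1 ?scale1r.
Qed.

Variable L : {vspace E}.
Hypothesis hL : L_of L W pi.

Lemma gl_in_graph X : (X, 0) \in L <-> annV W X.
Proof.
split => [/hL [X' [x [hX _ [-> <-]]]] | hX]; first by rewrite linear0 addr0.
by apply/hL; exists X, 0; rewrite mem0v linear0 addr0.
Qed.

Lemma graph_in_L x : x \in W -> (pi x, x) \in L.
Proof.
move=> xW; apply/hL; exists 0, x; rewrite add0r; split => // w _.
by rewrite mulmx0.
Qed.

(* <X + pi x + x, Y + pi y + y> = (pi x (y) + s(x, pi y)) / 2 = 0. *)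
Lemma graph_isotropic e f : e \in L -> f \in L -> epair e f = 0.
Proof.
move=> /hL [X [x [hX xW ->]]] /hL [Y [y [hY yW ->]]].
rewrite epairE /= mulmxDr (hX y yW) add0r sactionD (saction_annV gW xW hY).
by rewrite add0r saction_skew subrr scaler0.
Qed.

Hypothesis two_neq0 : (2%:R : F) != 0.

(* If A + z is orthogonal to L, then z is killed by W^0, so z lies in W. *)
Lemma perp_graph_snd A z : in_perp L (A, z) -> z \in W.
Proof.
move=> hp; apply: ann_annV => Y hY.
rewrite -(mproj_sum Y) mulmx_sumr big1 // => c _.
have YcL : (mproj c Y, 0) \in L by apply/gl_in_graph/annV_mproj.
apply: saction_mproj_eq0; have /(epair_eq0 two_neq0) := hp _ YcL.
by rewrite /= mul0mx add0r => ->.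
Qed.

(* L^perp = L: for A + z in L^perp, z is in W and pairing with the graph of pi
   shows that A - pi z kills W. *)
Lemma graph_max_isotropic : max_isotropic L.
Proof.
move=> [A z]; split => [eL f fL | hp]; first exact: graph_isotropic.
have zW := perp_graph_snd hp.
have annA : annV W (A - pi z).
  move=> w wW; have /(epair_eq0 two_neq0) /= hAz := hp _ (graph_in_L wW).
  have /(epair_eq0 two_neq0) /= hpz :=
    graph_isotropic (graph_in_L zW) (graph_in_L wW).
  have -> : w *m (A - pi z) =
      (w *m A + saction z (pi w)) - (w *m pi z + saction z (pi w)).
    by rewrite opprD addrACA subrr addr0 mulmxBr.
  by rewrite hAz hpz subrr.
by apply/hL; exists (A - pi z), z; rewrite subrK.
Qed.

Lemma graph_snd_ann x : x \in W <-> annGl (fun X : G => (X, 0) \in L) x.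
Proof.
split => [xW X /gl_in_graph hX | hx]; first exact: hX.
by apply: ann_annV => Y /gl_in_graph /hx.
Qed.

End GraphDescription.

Section EvenMaps.
Variables (F : fieldType) (m n : nat).
Local Notation V := (Vsp F m n).
Local Notation G := (glV F m n).

Definition even_part (s : V -> G) (x : V) : G :=
  \sum_(b : bool) mproj b (s (vproj b x)).

Lemma even_part_is_linear (s : {linear V -> G}) : linear (even_part s).
Proof.
move=> c x y; rewrite /even_part scaler_sumr -big_split.
by apply: eq_bigr => b _; rewrite !linearP.
Qed.
HB.instance Definition _ (s : {linear V -> G}) :=
  GRing.isLinear.Build F V G *:%R (even_part s) (even_part_is_linear s).

Lemma even_part_even (s : {linear V -> G}) : even_map (even_part s).
Proof.
move=> b x hx; rewrite /even_part big_bool /= !(vhomP hx).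
by case: b {hx}; rewrite /= linear0 linear0 ?addr0 ?add0r; apply: mhom_proj.
Qed.

Definition even_projector (W : {vspace V}) : G :=
  \sum_(b : bool) parity_mx F m n b *m lin1_mx (projv W) *m parity_mx F m n b.

Variable W : {vspace V}.
Local Notation P := (even_projector W).

Lemma even_projectorE y : y *m P = \sum_(b : bool) vproj b (projv W (vproj b y)).
Proof.
rewrite /even_projector mulmx_sumr; apply: eq_bigr => b _.
by rewrite !mulmxA -vprojE mul_rV_lin1 /= -vprojE.
Qed.

Lemma even_projector_even : mhom false P.
Proof.
rewrite /mhom; apply/matrixP => i j; rewrite !mxE; case: ifP => // h.
rewrite summxE big1 // => b _; rewrite mul_mx_diag mul_diag_mx !mxE.
by move: h; case: (ipar i); case: (ipar j); case: b; rewrite //= ?mul0r ?mulr0.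
Qed.

Hypothesis gW : graded_V W.

Lemma even_projector_id x : x \in W -> x *m P = x.
Proof.
move=> xW; rewrite even_projectorE -[RHS]vproj_sum; apply: eq_bigr => b _.
by rewrite projv_id ?vprojK ?eqxx ?gW.
Qed.

Lemma even_projector_mem y : y *m P \in W.
Proof. by rewrite even_projectorE memv_suml // => b _; apply/gW/memv_proj. Qed.

End EvenMaps.

Section Extension.
Variables (F : fieldType) (m n : nat).
Local Notation V := (Vsp F m n).
Local Notation G := (glV F m n).

Definition extend (P : G) (s : V -> G) (x : V) : G := P *m s (x *m P).

Lemma extend_is_linear P (s : {linear V -> G}) : linear (extend P s).
Proof.
by move=> c x y; rewrite /extend mulmxDl -scalemxAl linearP mulmxDr scalemxAr.
Qed.
HB.instance Definition _ P (s : {linear V -> G}) :=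
  GRing.isLinear.Build F V G *:%R (extend P s) (extend_is_linear P s).

Lemma extend_even P s : mhom false P -> even_map s -> even_map (extend P s).
Proof.
by move=> evP evs b x hx; apply: (mhomM evP (evs _ _ (vhom_mul_even evP hx))).
Qed.

End Extension.

Section MaxIsotropic.
Variables (F : fieldType) (m n : nat).
Local Notation V := (Vsp F m n).
Local Notation G := (glV F m n).
Local Notation E := (Esp F m n).

Variable L : {vspace E}.
Hypotheses (gL : graded_E L) (maxL : max_isotropic L).
Hypothesis two_neq0 : (2%:R : F) != 0.

(* W is the projection of L onto V, and lift w + w is a linear section of L
   over W. *)
Definition Lsnd : 'Hom(E, V) := (linfun snd \o projv L)%VF.
Definition WL : {vspace V} := limg Lsnd.
Definition lift : 'Hom(V, G) := (linfun fst \o projv L \o Lsnd^-1)%VF.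

Lemma snd_in_WL A x : (A, x) \in L -> x \in WL.
Proof.
move=> eL; have -> : x = Lsnd (A, x) by rewrite comp_lfunE lfunE projv_id.
exact: memv_img (memvf _).
Qed.

Lemma lift_in_L w : w \in WL -> (lift w, w) \in L.
Proof.
move=> wW; have := memv_proj L (Lsnd^-1%VF w).
have e2 : (projv L (Lsnd^-1%VF w)).2 = w.
  by rewrite -[RHS](limg_lfunVK wW) comp_lfunE lfunE.
rewrite /lift !comp_lfunE lfunE /=.
by case: (projv L _) e2 => a b /= ->.
Qed.

Lemma WL_graded : graded_V WL.
Proof. by move=> b x /lift_in_L /(gL b) /snd_in_WL. Qed.

Lemma gl_in_maxL Y : (Y, 0) \in L <-> annV WL Y.
Proof.
split => [YL w wW | annY].
  have /(epair_eq0 two_neq0) := (maxL (Y, 0)).1 YL _ (lift_in_L wW).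
  by rewrite /= saction0 addr0.
apply/maxL => -[B y] /snd_in_WL yW.
by rewrite epairE /= saction0 addr0 annY ?scaler0.
Qed.

(* Since L is graded, the even part of the section is still a section. *)
Lemma even_lift_in_L w : w \in WL -> (even_part lift w, w) \in L.
Proof.
move=> wW; have -> : (even_part lift w, w) =
    eproj true (lift (vproj true w), vproj true w)
    + eproj false (lift (vproj false w), vproj false w).
  rewrite /eproj /even_part big_bool /= !vprojK /=.
  by rewrite -[w in (_, w)]vproj_sum big_bool.
by rewrite memvD // gL // lift_in_L // WL_graded.
Qed.

Definition piL : {linear V -> G} := extend (even_projector WL) (even_part lift).
Local Notation P := (even_projector WL).

Lemma piL_even : even_map piL.
Proof. exact: (extend_even (even_projector_even WL) (even_part_even lift)). Qed.

(* The graph of pi over W lies in L: pi w and the even section at w differ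
   by (P - 1) o (even section at w), which kills W. *)
Lemma piL_graph w : w \in WL -> (piL w, w) \in L.
Proof.
move=> wW; rewrite /= /extend (even_projector_id WL_graded) //.
set S := even_part lift w.
have -> : (P *m S, w) = ((P - 1) *m S, 0) + (S, w).
  by rewrite pairD mulmxBl mul1mx subrK add0r.
rewrite memvD ?even_lift_in_L //; apply/gl_in_maxL => x xW.
by rewrite mulmxA mulmxBr mulmx1 (even_projector_id WL_graded) // subrr mul0mx.
Qed.

(* Super skew-symmetry of pi reduces to the isotropy of the graph of the even
   section at the points P x, P y of W. *)
Lemma piL_skew : super_skew piL.
Proof.
move=> a b x y hx hy; rewrite /= /extend !mulmxA.
have evP := even_projector_even WL.
have PxL := even_lift_in_L (even_projector_mem WL_graded x).
have PyL := even_lift_in_L (even_projector_mem WL_graded y).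
have /(epair_eq0 two_neq0) := (maxL _).1 PxL _ PyL.
have hPy := even_part_even lift (vhom_mul_even evP hy).
rewrite /= (saction_hom (vhom_mul_even evP hx) hPy).
by move/eqP; rewrite addr_eq0 => /eqP.
Qed.

Lemma piL_describes_L : L_of L WL piL.
Proof.
move=> [A x]; split => [eL | [X [x' [annX x'W [-> ->]]]]].
  have xW := snd_in_WL eL; exists (A - piL x), x; split; rewrite ?subrK //.
  by apply/gl_in_maxL; rewrite -(subrr x) -pairB memvB ?piL_graph.
by rewrite -[x' in (_, x')]add0r -pairD memvD ?piL_graph //; apply/gl_in_maxL.
Qed.

End MaxIsotropic.

Unset Implicit Arguments.

Theorem mainTheorem4 (F : fieldType) (m n : nat)
  (charF0 : [pchar F] =i pred0)
  (L : {vspace Esp F m n}) (gradedL : graded_E L) :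
  (max_isotropic L <->
     exists (W : {vspace Vsp F m n}) (pi : {linear Vsp F m n -> glV F m n}),
       [/\ graded_V W, even_map pi, super_skew pi & L_of L W pi])
  /\
  (forall (W : {vspace Vsp F m n}) (pi : {linear Vsp F m n -> glV F m n}),
     graded_V W -> even_map pi -> super_skew pi -> L_of L W pi ->
     (forall X : glV F m n, (X, 0) \in L <-> annV W X) /\
     (forall x : Vsp F m n,
        x \in W <-> annGl (fun X : glV F m n => (X, 0) \in L) x)).
Proof.
have two_neq0 : (2%:R : F) != 0 by move/pcharf0P: charF0 => ->.
split; first split.
- move=> maxL; exists (WL L), (piL L); split.
  + exact: WL_graded gradedL.
  + exact: piL_even.
  + exact: piL_skew gradedL maxL two_neq0.
  + exact: piL_describes_L gradedL maxL two_neq0.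
- case=> W [pi [gW evpi skpi descL]].
  exact (graph_max_isotropic gW evpi skpi descL two_neq0).
- move=> W pi gW evpi skpi descL; split => [X | x].
  + exact: gl_in_graph descL X.
  + exact: graph_snd_ann descL x.
Qed.
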